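(* Let $m$ be a prime with $m\ge l$ and let $L$ be an allowable $2l$-cycle chain for $\mathcal H_{m,\mathcal B,S}$. Then $n(L)=1$, so the number of distinct $2l$-cycles in the Tanner graph corresponding to $L$ equals $m$. Consequently the number of $2l$-cycles of the Tanner graph is $m$ times the number of isomorphism classes of allowable $2l$-cycle chains.
   Context: Let $m\ge1$, $\mathcal B=[B_1,\ldots,B_k]$ a list of subsets of a finite set of row-block indices, and $s_{i,j}\in\mathbb{Z}_m$ for $i\in B_j$. $\mathcal H_{m,\mathcal B,S}$ is the block matrix whose $(i,j)$ block is the $m\times m$ circulant permutation matrix with entry $(x,y)$ equal to 1 iff $x\equiv y+s_{i,j}\pmod m$ when $i\in B_j$, and zero otherwise; its Tanner graph has check nodes $c(i,x)$, variable nodes $u(j,y)$, with $c(i,x)\sim u(j,y)$ iff $i\in B_j$ and $x\equiv y+s_{i,j}$. A $2l$-cycle chain ($l\ge2$) is $L=(i_0,j_0,\ldots,i_{l-1},j_{l-1})$, indices mod $l$, with $i_t,i_{t+1}\in B_{j_t}$, $i_t\ne i_{t+1}$, $j_t\ne j_{t+1}$, and $\sum_{t=0}^{l-1}(s_{i_t,j_t}-s_{i_{t+1},j_t})\equiv0\pmod m$. For $r\in\mathbb{Z}_m$: $x_0=r$, $y_t=x_t-s_{i_t,j_t}$, $x_{t+1}=y_t+s_{i_{t+1},j_t}$ (mod $m$), giving the closed walk $W_r=c(i_0,x_0),u(j_0,y_0),c(i_1,x_1),\ldots,u(j_{l-1},y_{l-1}),c(i_0,x_0)$; $L$ is allowable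 if for every $r$ the $2l$ vertices are pairwise distinct, and a $2l$-cycle of the Tanner graph corresponds to $L$ if it is the cycle traced by some $W_r$. Let $e$ be the smallest integer in $\{1,\ldots,l\}$ with $(i_{t+e},j_{t+e})=(i_t,j_t)$ for all $t$; $n(L)=l/e$. Two $2l$-cycle chains are isomorphic if one is obtained from the other by a cyclic shift by an even number of positions, possibly combined with reversal of the traversal direction (i.e. they describe the same cyclic sequence of blocks read from a different starting row-block or in the opposite direction). *)

From HB Require Import structures.
From mathcomp Require Import all_boot all_order all_algebra.
Set Implicit Arguments. Unset Strict Implicit. Unset Printing Implicit Defensive.
Import GRing.Theory.
Local Open Scope ring_scope.

Definition cidx (l : nat) (hl : (0 < l)%N) (t : nat) : 'I_l :=
  Ordinal (ltn_pmod t hl).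

Section Tanner.
(* I : row-block indices; columns 'I_k; B j = B_j; s i j = s_{i,j} (only
   used when i \in B j). *)
Variables (I : finType) (k m : nat) (B : 'I_k -> {set I}) (s : I -> 'I_k -> 'Z_m).

(* check node c(i,x) = (i,x); variable node u(j,y) = (j,y) *)
Definition tadj (c : I * 'Z_m) (v : 'I_k * 'Z_m) : bool :=
  (c.1 \in B v.1) && (c.2 == v.2 + s c.1 v.1).

(* E (an edge set) is a 2l-cycle of the Tanner graph: it is the edge set of a
   closed walk c_0,v_0,c_1,v_1,...,c_{l-1},v_{l-1},c_0 of 2l pairwise
   distinct vertices (checks and variables are of different types). *)
Definition tanner_cycle (l : nat) (E : {set (I * 'Z_m) * ('I_k * 'Z_m)}) : bool :=
  [exists c : {ffun 'I_l -> I * 'Z_m}, exists v : {ffun 'I_l -> 'I_k * 'Z_m},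
    [&& injectiveb c, injectiveb v,
        [forall t, tadj (c t) (v t) && tadj (c (ordS t)) (v t)] &
        E == [set (c t, v t) | t : 'I_l] :|: [set (c (ordS t), v t) | t : 'I_l]]].

Variables (l : nat) (hl : (0 < l)%N).

(* A candidate chain L = (i_0,j_0,...,i_{l-1},j_{l-1}), L t = (i_t, j_t). *)
Definition chain_t := {ffun 'I_l -> I * 'I_k}.

Definition ci (L : chain_t) (t : nat) : I := (L (cidx hl t)).1.
Definition cj (L : chain_t) (t : nat) : 'I_k := (L (cidx hl t)).2.

Definition is_chain (L : chain_t) : bool :=
  [forall t : 'I_l,
     [&& ci L t \in B (cj L t), ci L t.+1 \in B (cj L t),
         ci L t != ci L t.+1 & cj L t != cj L t.+1]]
  && (\sum_(t < l) (s (ci L t) (cj L t) - s (ci L t.+1) (cj L t)) == 0).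

(* the walk W_r: x_0 = r, y_t = x_t - s_{i_t,j_t}, x_{t+1} = y_t + s_{i_{t+1},j_t} *)
Fixpoint wx (L : chain_t) (r : 'Z_m) (t : nat) : 'Z_m :=
  match t with
  | 0 => r
  | t'.+1 => wx L r t' - s (ci L t') (cj L t') + s (ci L t) (cj L t')
  end.
Definition wy (L : chain_t) (r : 'Z_m) (t : nat) : 'Z_m :=
  wx L r t - s (ci L t) (cj L t).

Definition wcheck L r t : I * 'Z_m := (ci L t, wx L r t).
Definition wvar L r t : 'I_k * 'Z_m := (cj L t, wy L r t).

Definition allowable (L : chain_t) : bool :=
  [forall r : 'Z_m, forall t1 : 'I_l, forall t2 : 'I_l,
     [&& (wcheck L r t1 == wcheck L r t2) ==> (t1 == t2)
       & (wvar L r t1 == wvar L r t2) ==> (t1 == t2)]].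

Definition allowable_chain (L : chain_t) : bool := is_chain L && allowable L.

(* the cycle (edge set) traced by W_r; its last edge joins u(j_{l-1},y_{l-1})
   to c(i_l, x_l) = c(i_0, x_0) *)
Definition walk_edges (L : chain_t) (r : 'Z_m) : {set (I * 'Z_m) * ('I_k * 'Z_m)} :=
  [set (wcheck L r t, wvar L r t) | t : 'I_l]
  :|: [set (wcheck L r t.+1, wvar L r t) | t : 'I_l].

(* e = smallest e in {1..l} with (i_{t+e},j_{t+e}) = (i_t,j_t) for all t;
   n(L) = l / e *)
Definition periodicb (L : chain_t) (e : nat) : bool :=
  [forall t : 'I_l, L (cidx hl (t + e)) == L (cidx hl t)].
Definition chain_e (L : chain_t) : nat :=
  (find (fun e => periodicb L e.+1) (iota 0 l)).+1.
Definition chain_n (L : chain_t) : nat := l %/ chain_e L.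

(* isomorphism: cyclic shift by an even number of positions (i.e. by a
   row-block positions), possibly combined with reversal of direction *)
Definition shiftc (a : nat) (L : chain_t) : chain_t :=
  [ffun t : 'I_l => L (cidx hl (t + a))].
(* reversed traversal: i_0, j_{l-1}, i_{l-1}, j_{l-2}, ..., i_1, j_0 *)
Definition revc (L : chain_t) : chain_t :=
  [ffun t : 'I_l => ((L (cidx hl (l - t))).1, (L (cidx hl (l - t.+1))).2)].
Definition chain_iso (L1 L2 : chain_t) : bool :=
  [exists a : 'I_l, (L2 == shiftc a L1) || (L2 == shiftc a (revc L1))].

Definition allowable_chains : {set chain_t} := [set L | allowable_chain L].
Definition iso_classes : {set {set chain_t}} :=
  [set [set L' in allowable_chains | chain_iso L L'] | L in allowable_chains].

End Tanner.

(* Reading positions modulo l, the walk W_r of a chain is determined by r, and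
   the 2l-cycles of the Tanner graph are exactly the edge sets of the walks W_r of
   allowable chains.  Two such walks have the same edge set only if their chains
   differ by a rotation or a reflection of Z/l, i.e. are isomorphic, so the cycles
   are partitioned into the sets {W_r | r in Z_m}, one for each isomorphism class.
   It remains to see that r |-> W_r is injective.  A coincidence W_r = W_r' is a
   rotation by some t with L(u + t) = L(u), or a reflection, which fixes a vertex
   or an edge and so forces i_u = i_(u+1) or j_u = j_(u+1).  For a period t <> 0:
   if l < m, the x-coordinate drifts by the same d along each stretch of t steps
   and l d = 0 in Z_m forces d = 0, contradicting allowability; if l = m is prime,
   t generates Z/l, so 1 is a period, contradicting i_0 <> i_1.  Aperiodicity is
   also what makes n(L) = 1. *)

From mathcomp Require Import all_boot all_order all_algebra.
Set Implicit Arguments. Unset Strict Implicit. Unset Printing Implicit Defensive.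
Import GRing.Theory.
Local Open Scope ring_scope.

Lemma addr1_neq (R : nzRingType) (x : R) : x + 1 != x.
Proof. by rewrite -subr_eq0 addrAC subrr add0r oner_neq0. Qed.

Lemma Zp_unit_nat p x : prime p -> (0 < x < p)%N -> (x%:R : 'Z_p) \is a GRing.unit.
Proof.
move=> p_pr /andP [x_gt0 x_lt_p].
by rewrite unitZpE ?prime_gt1 // prime_coprime // gtnNdvd.
Qed.

Lemma imset_bij (T U : finType) (f : T -> U) (g : T -> T) : bijective g ->
  [set f (g t) | t : T] = [set f t | t : T].
Proof.
case=> h gK hK; apply/setP => x; apply/imsetP/imsetP => [[t _ ->]|[t _ ->]].
  by exists (g t).
by exists (h t); rewrite ?hK.
Qed.

Lemma class_eq (T : finType) (A : {set T}) (R : rel T) x y :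
  equivalence_rel R -> y \in A -> [set z in A | R x z] = [set z in A | R y z] <-> R x y.
Proof.
move=> eqR Ay; split=> [E | Rxy].
  have : y \in [set z in A | R y z] by rewrite inE Ay (fst (eqR y y y)).
  by rewrite -E inE => /andP [].
by apply/setP => z; rewrite !inE (snd (eqR x y z) Rxy).
Qed.

Lemma leq_card_imset_ker (T U V : finType) (A : {set T}) (f : T -> U) (g : T -> V) :
  {in A &, forall x y, f x = f y -> g x = g y} -> (#|g @: A| <= #|f @: A|)%N.
Proof.
move=> fg; have [->|[x0 Ax0]] := set_0Vmem A; first by rewrite !imset0 !cards0.
pose h u := g (odflt x0 [pick x in A | f x == u]).
apply: (leq_trans _ (leq_imset_card h (f @: A))); apply: subset_leq_card.
apply/subsetP => _ /imsetP [x Ax ->]; apply/imsetP; exists (f x); first exact: imset_f.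
rewrite /h; case: pickP => [y /andP [Ay /eqP fyx]|/(_ x)]; last by rewrite Ax eqxx.
exact: fg.
Qed.

Lemma card_imset_ker (T U V : finType) (A : {set T}) (f : T -> U) (g : T -> V) :
  {in A &, forall x y, f x = f y <-> g x = g y} -> #|f @: A| = #|g @: A|.
Proof.
move=> fg; apply/eqP; rewrite eqn_leq !leq_card_imset_ker // => x y Ax Ay.
  by case: (fg x y Ax Ay).
by case: (fg x y Ax Ay).
Qed.

Section TannerCycles.
Variables (I : finType) (k m n : nat) (B : 'I_k -> {set I}) (s : I -> 'I_k -> 'Z_m).
Variable hl : (0 < n.+2)%N.
(* l is written n.+2 so that the positions 'I_l form the ring Z/l. *)
Local Notation pos := 'I_n.+2.
Local Notation chain := (chain_t I k n.+2).

Lemma inZpS t : inZp t.+1 = inZp t + 1 :> pos.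
Proof. by rewrite -!Zp_nat mulrSr. Qed.

Lemma pos_natr_period : n.+2%:R = 0 :> pos.
Proof. by rewrite Zp_nat; apply: val_inj; rewrite /= modnn. Qed.

Lemma pos_ind (P : pos -> Prop) : P 0 -> (forall u, P u -> P (u + 1)) -> forall u, P u.
Proof.
move=> P0 PS u; rewrite -[u]valZpK; elim: (val u) => [|j IH].
  by rewrite (_ : inZp 0 = 0) //; apply: val_inj.
by rewrite inZpS; apply: PS.
Qed.

Lemma cidxE t : cidx hl t = inZp t.
Proof. exact: val_inj. Qed.

Definition rowb (L : chain) (u : pos) : I := (L u).1.
Definition colb (L : chain) (u : pos) : 'I_k := (L u).2.

Lemma ciE L t : ci hl L t = rowb L (inZp t).
Proof. by rewrite /ci cidxE. Qed.

Lemma cjE L t : cj hl L t = colb L (inZp t).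
Proof. by rewrite /cj cidxE. Qed.

Definition step (L : chain) (u : pos) : 'Z_m :=
  s (rowb L (u + 1)) (colb L u) - s (rowb L u) (colb L u).

Lemma is_chainE L : is_chain B s hl L =
  [forall u : pos, [&& rowb L u \in B (colb L u), rowb L (u + 1) \in B (colb L u),
                      rowb L u != rowb L (u + 1) & colb L u != colb L (u + 1)]]
  && (\sum_(u : pos) step L u == 0).
Proof.
congr andb.
  by apply: eq_forallb => u; rewrite !ciE !cjE inZpS valZpK.
rewrite -oppr_eq0 -sumrN; congr (_ == 0); apply: eq_bigr => u _.
by rewrite !ciE !cjE inZpS valZpK opprB.
Qed.

Definition xpos (L : chain) (r : 'Z_m) (u : pos) : 'Z_m := wx s hl L r u.

Lemma wxS L r t : wx s hl L r t.+1 = wx s hl L r t + step L (inZp t).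
Proof. by rewrite /= /step !ciE !cjE inZpS addrAC addrA. Qed.

Lemma wx_sum L r t : wx s hl L r t = r + \sum_(i < t) step L (inZp i).
Proof.
elim: t => [|t IH]; first by rewrite big_ord0 addr0.
by rewrite wxS IH big_ord_recr [RHS]addrA.
Qed.

Lemma xpos_translate L r u : xpos L r u = r + xpos L 0 u.
Proof. by rewrite /xpos !wx_sum add0r. Qed.

Lemma xpos_char L r (F : pos -> 'Z_m) :
  F 0 = r -> (forall u, F (u + 1) = F u + step L u) -> forall u, xpos L r u = F u.
Proof.
move=> F0 FS u; rewrite -{2}[u]valZpK /xpos; elim: (val u) => [|j IH].
  by rewrite (_ : inZp 0 = 0) //; apply: val_inj.
by rewrite wxS IH inZpS FS.
Qed.

Section ClosedWalk.
Variable L : chain.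
Hypothesis step_sum0 : \sum_(u : pos) step L u = 0.

Lemma wx_periodic r t : wx s hl L r (t + n.+2) = wx s hl L r t.
Proof.
elim: t => [|t IH].
  rewrite add0n wx_sum (eq_bigr (fun i : pos => step L i)) ?step_sum0 ?addr0 //.
  by move=> i _; rewrite valZpK.
by rewrite addSn !wxS IH -!Zp_nat natrD pos_natr_period addr0.
Qed.

Lemma wx_mod r t : wx s hl L r t = xpos L r (inZp t).
Proof.
rewrite /xpos /= {1}(divn_eq t n.+2); elim: (t %/ n.+2)%N => [|q IH] //.
by rewrite mulSn -addnA addnC wx_periodic.
Qed.

Lemma xposS r u : xpos L r (u + 1) = xpos L r u + step L u.
Proof. by rewrite -[u in u + 1]valZpK -inZpS -wx_mod wxS valZpK. Qed.

End ClosedWalk.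

Lemma chain_step_sum L : is_chain B s hl L -> \sum_(u : pos) step L u = 0.
Proof. by rewrite is_chainE => /andP [_ /eqP]. Qed.

Lemma chainP L : is_chain B s hl L -> forall u : pos,
  [/\ rowb L u \in B (colb L u), rowb L (u + 1) \in B (colb L u),
      rowb L u != rowb L (u + 1) & colb L u != colb L (u + 1)].
Proof. by rewrite is_chainE => /andP [/forallP H _] u; apply/and4P. Qed.

Definition check_at (L : chain) r (u : pos) : I * 'Z_m := (rowb L u, xpos L r u).
Definition var_at (L : chain) r (u : pos) : 'I_k * 'Z_m :=
  (colb L u, xpos L r u - s (rowb L u) (colb L u)).

Definition cycle_edges (L : chain) r : {set (I * 'Z_m) * ('I_k * 'Z_m)} :=
  [set (check_at L r u, var_at L r u) | u : pos]
  :|: [set (check_at L r (u + 1), var_at L r u) | u : pos].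

Lemma walk_edgesE L r : is_chain B s hl L -> walk_edges s hl L r = cycle_edges L r.
Proof.
move=> /chain_step_sum L0; congr (_ :|: _); apply: eq_imset => u.
  by rewrite /wcheck /wvar /wy ciE cjE valZpK.
by rewrite /wcheck /wvar /wy !ciE cjE wx_mod // inZpS valZpK.
Qed.

Lemma check_at_eq L r r' u v :
  (check_at L r u == check_at L r v) = (check_at L r' u == check_at L r' v).
Proof.
by rewrite !xpair_eqE (xpos_translate L r) (xpos_translate L r v)
  (xpos_translate L r') (xpos_translate L r' v) !(inj_eq (addrI _)).
Qed.

Lemma var_at_eq L r r' u v :
  (var_at L r u == var_at L r v) = (var_at L r' u == var_at L r' v).
Proof.
by rewrite !xpair_eqE (xpos_translate L r) (xpos_translate L r v)
  (xpos_translate L r') (xpos_translate L r' v) -!addrA !(inj_eq (addrI _)).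
Qed.

Lemma allowableP L r :
  reflect (injective (check_at L r) /\ injective (var_at L r)) (allowable s hl L).
Proof.
have E r' (u : pos) :
    wcheck s hl L r' u = check_at L r' u /\ wvar s hl L r' u = var_at L r' u.
  by rewrite /wcheck /wvar /wy ciE cjE valZpK.
apply: (iffP forallP) => [H | [inj_c inj_v] r'].
  split=> u v; have /forallP /(_ u) /forallP /(_ v) /andP [/implyP Hc /implyP Hv] := H r.
    by case: (E r u) (E r v) Hc => -> _ [-> _] Hc /eqP /Hc /eqP.
  by case: (E r u) (E r v) Hv => _ -> [_ ->] Hv /eqP /Hv /eqP.
apply/forallP => u; apply/forallP => v; case: (E r' u) (E r' v) => -> -> [-> ->].
rewrite (check_at_eq L r' r) (var_at_eq L r' r).
by apply/andP; split; apply/implyP => /eqP; [move/inj_c | move/inj_v] => ->.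
Qed.

Lemma ordSE (u : pos) : ordS u = u + 1.
Proof. exact/esym/(@add_Zp_1 n.+2). Qed.

Section ChainOfCycle.
Variables (c : pos -> I * 'Z_m) (v : pos -> 'I_k * 'Z_m).
Hypotheses (inj_c : injective c) (inj_v : injective v).
Hypothesis cv_adj : forall u, tadj B s (c u) (v u) && tadj B s (c (u + 1)) (v u).

Definition chain_of : chain := [ffun u => ((c u).1, (v u).1)].

Lemma cv_adjP u :
  [/\ (c u).1 \in B (v u).1, (c u).2 = (v u).2 + s (c u).1 (v u).1,
      (c (u + 1)).1 \in B (v u).1 & (c (u + 1)).2 = (v u).2 + s (c (u + 1)).1 (v u).1].
Proof. by have /andP [/andP [-> /eqP ->] /andP [-> /eqP ->]] := cv_adj u. Qed.

Lemma step_chain_of u : step chain_of u = (c (u + 1)).2 - (c u).2.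
Proof.
have [_ -> _ ->] := cv_adjP u.
by rewrite /step /rowb /colb !ffunE /= opprD addrACA subrr add0r.
Qed.

Lemma chain_of_chain : is_chain B s hl chain_of.
Proof.
rewrite is_chainE; apply/andP; split.
  apply/forallP => u; rewrite /rowb /colb !ffunE /=.
  have [-> c_u -> c_u1] := cv_adjP u; rewrite /=; apply/andP; split.
    apply/eqP => e; have /eqP := addr1_neq u; apply; apply: inj_c.
    by rewrite [c u]surjective_pairing [c (u + 1)]surjective_pairing c_u c_u1 e.
  apply/eqP => e; have /eqP := addr1_neq u; apply; apply: inj_v.
  have [_ c_u2 _ _] := cv_adjP (u + 1).
  rewrite [v u]surjective_pairing [v (u + 1)]surjective_pairing -e; congr pair.
  by apply: (addIr (s (c (u + 1)).1 (v u).1)); rewrite -c_u1 e -c_u2.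
rewrite (eq_bigr _ (fun u _ => step_chain_of u)) sumrB.
by rewrite [X in _ - X](reindex_inj (addIr 1)) subrr.
Qed.

Lemma xpos_chain_of u : xpos chain_of (c 0).2 u = (c u).2.
Proof.
by apply: (xpos_char (F := fun w => (c w).2)) => // w; rewrite step_chain_of [RHS]addrC subrK.
Qed.

Lemma check_at_chain_of u : check_at chain_of (c 0).2 u = c u.
Proof. by rewrite /check_at xpos_chain_of /rowb ffunE -surjective_pairing. Qed.

Lemma var_at_chain_of u : var_at chain_of (c 0).2 u = v u.
Proof.
have [_ c_u _ _] := cv_adjP u.
by rewrite /var_at xpos_chain_of /rowb /colb ffunE c_u addrK -surjective_pairing.
Qed.

Lemma chain_of_allowable : allowable_chain B s hl chain_of.
Proof.
rewrite /allowable_chain chain_of_chain; apply/(allowableP _ (c 0).2).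
split=> u w; first by rewrite !check_at_chain_of => /inj_c.
by rewrite !var_at_chain_of => /inj_v.
Qed.

End ChainOfCycle.

Lemma tanner_cycleP E : reflect
  (exists2 L, allowable_chain B s hl L & exists r, E = cycle_edges L r)
  (tanner_cycle B s n.+2 E).
Proof.
apply: (iffP existsP) => [[c /existsP [v]] | [L /andP [HL HA] [r ->]]].
  case/and4P=> /injectiveP inj_c /injectiveP inj_v /forallP adj /eqP ->.
  have cv_adj u : tadj B s (c u) (v u) && tadj B s (c (u + 1)) (v u).
    by rewrite -ordSE.
  exists (chain_of c v); first exact: chain_of_allowable.
  exists (c 0).2; congr (_ :|: _); apply: eq_imset => u;
    by rewrite ?check_at_chain_of ?var_at_chain_of ?ordSE.
have [inj_c inj_v] := allowableP L r HA.
exists [ffun u => check_at L r u]; apply/existsP; exists [ffun u => var_at L r u].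
apply/and4P; split.
- by apply/injectiveP => u w; rewrite !ffunE => /inj_c.
- by apply/injectiveP => u w; rewrite !ffunE => /inj_v.
- apply/forallP => u; rewrite !ffunE ordSE /tadj /=.
  have [-> -> _ _] := chainP HL u.
  by rewrite subrK eqxx xposS ?chain_step_sum // /step; apply/eqP; rewrite [LHS]addrCA [RHS]addrC.
- apply/eqP; congr (_ :|: _); apply: eq_imset => u; by rewrite !ffunE ?ordSE.
Qed.

Lemma mem_cycle_edges L r u : (check_at L r u, var_at L r u) \in cycle_edges L r.
Proof. by rewrite inE imset_f. Qed.

Lemma mem_cycle_edgesS L r u :
  (check_at L r (u + 1), var_at L r u) \in cycle_edges L r.
Proof. by rewrite inE (imset_f (fun u => (check_at L r (u + 1), var_at L r u))) ?orbT. Qed.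

Section Rigidity.
Variable L : chain.
Hypothesis HA : allowable s hl L.

Lemma cycle_edges_var_nbrs r c u : (c, var_at L r u) \in cycle_edges L r ->
  c = check_at L r u \/ c = check_at L r (u + 1).
Proof.
have [_ /(_ u) inj_v] := allowableP L r HA.
by rewrite inE => /orP [] /imsetP [w _ /pair_equal_spec [-> /inj_v ->]]; [left | right].
Qed.

Lemma cycle_edges_check_nbrs r w u : (check_at L r u, w) \in cycle_edges L r ->
  w = var_at L r u \/ w = var_at L r (u - 1).
Proof.
have [/(_ u) inj_c _] := allowableP L r HA.
rewrite inE => /orP [] /imsetP [t _ /pair_equal_spec [/inj_c -> ->]]; first by left.
by right; rewrite addrK.
Qed.

End Rigidity.

Lemma cycle_edges_rigid L L' r r' : allowable s hl L -> allowable s hl L' ->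
  cycle_edges L r = cycle_edges L' r' -> exists t,
  (forall u, check_at L' r' u = check_at L r (t + u) /\ var_at L' r' u = var_at L r (t + u))
  \/ (forall u, check_at L' r' u = check_at L r (t - u + 1) /\ var_at L' r' u = var_at L r (t - u)).
Proof.
move=> HA HA' EW; have [inj_c' inj_v'] := allowableP L' r' HA'.
have succ_neq (u : pos) : u + 1 <> u by apply/eqP/addr1_neq.
have := mem_cycle_edges L' r' 0; rewrite -EW inE.
case/orP=> /imsetP [t _ /pair_equal_spec [C0 V0]]; exists t; [left | right].
all: elim/pos_ind => [|u [Cu Vu]].
- by rewrite !addr0.
- have := mem_cycle_edgesS L' r' u; rewrite -EW Vu => /(cycle_edges_var_nbrs HA) [].
    by rewrite -Cu => /inj_c' /succ_neq.
  move=> Cu1; split; first by rewrite Cu1 addrA.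
  have := mem_cycle_edges L' r' (u + 1); rewrite -EW Cu1.
  case/(cycle_edges_check_nbrs HA) => [->|]; first by rewrite addrA.
  by rewrite addrK -Vu => /inj_v' /succ_neq.
- by rewrite !subr0.
- have := mem_cycle_edgesS L' r' u; rewrite -EW Vu => /(cycle_edges_var_nbrs HA) [] Cu1;
    last by move: Cu1; rewrite -Cu => /inj_c' /succ_neq.
  split; first by rewrite Cu1 opprD addrA subrK.
  have := mem_cycle_edges L' r' (u + 1); rewrite -EW Cu1.
  case/(cycle_edges_check_nbrs HA) => [|->]; last by rewrite opprD addrA.
  by rewrite -Vu => /inj_v' /succ_neq.
Qed.

Definition shift (a : pos) (L : chain) : chain := [ffun u => L (u + a)].
Definition rev (L : chain) : chain := [ffun u => ((L (- u)).1, (L (- u - 1)).2)].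

Lemma inZp_sub t : (t <= n.+2)%N -> inZp (n.+2 - t) = - inZp t :> pos.
Proof.
by move=> le_t_l; rewrite -!Zp_nat natrB // pos_natr_period sub0r.
Qed.

Lemma shiftcE a L : shiftc hl a L = shift (inZp a) L.
Proof. by apply/ffunP => u; rewrite !ffunE cidxE -!Zp_nat natrD natr_Zp. Qed.

Lemma revcE L : revc hl L = rev L.
Proof.
apply/ffunP => u; rewrite !ffunE !cidxE !inZp_sub ?inZpS ?valZpK ?opprD //.
exact: ltnW.
Qed.

Lemma chain_isoP L1 L2 : reflect (exists a, L2 = shift a L1 \/ L2 = shift a (rev L1))
  (chain_iso hl L1 L2).
Proof.
apply: (iffP existsP) => [[a /orP [] /eqP ->]|[a [] ->]]; exists a.
all: rewrite ?shiftcE ?revcE valZpK ?eqxx ?orbT //; by [left | right].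
Qed.

Lemma shiftD a b L : shift a (shift b L) = shift (a + b) L.
Proof. by apply/ffunP => u; rewrite !ffunE addrA. Qed.

Lemma shift0 L : shift 0 L = L.
Proof. by apply/ffunP => u; rewrite ffunE addr0. Qed.

Lemma revK : involutive rev.
Proof.
move=> L; apply/ffunP => u; rewrite !ffunE /= opprD !opprK addrK.
by case: (L u).
Qed.

Lemma rev_shift a L : rev (shift a L) = shift (- a) (rev L).
Proof. by apply/ffunP => u; rewrite !ffunE /= opprB addrAC -!(addrC a). Qed.

Lemma chain_iso_refl (L : chain) : chain_iso hl L L.
Proof. by apply/chain_isoP; exists 0; left; rewrite shift0. Qed.

Lemma chain_iso_sym (L1 L2 : chain) : chain_iso hl L1 L2 -> chain_iso hl L2 L1.
Proof.
case/chain_isoP=> a [] ->; apply/chain_isoP.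
  by exists (- a); left; rewrite shiftD addNr shift0.
by exists a; right; rewrite rev_shift revK shiftD addrN shift0.
Qed.

Lemma chain_iso_trans (L1 L2 L3 : chain) :
  chain_iso hl L1 L2 -> chain_iso hl L2 L3 -> chain_iso hl L1 L3.
Proof.
case/chain_isoP=> a L12 /chain_isoP [b [] ->]; apply/chain_isoP;
  case: L12 => ->; [exists (b + a) | exists (b + a) | exists (b - a) | exists (b - a)].
- by left; rewrite shiftD.
- by right; rewrite shiftD.
- by right; rewrite rev_shift shiftD.
- by left; rewrite rev_shift revK shiftD.
Qed.

Lemma step_rev L u : step (rev L) u = - step L (- u - 1).
Proof. by rewrite /step /rowb /colb !ffunE /= opprD subrK opprB. Qed.

Section ClosedWalkSymmetries.
Variable L : chain.
Hypothesis step_sum0 : \sum_(u : pos) step L u = 0.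

Lemma step_sum0_rev : \sum_(u : pos) step (rev L) u = 0.
Proof.
have inj_refl : injective (fun u : pos => - u - 1) by move=> u w /addIr /oppr_inj.
rewrite (eq_bigr _ (fun u _ => step_rev L u)) sumrN.
by rewrite -(reindex_inj inj_refl (P := xpredT) (F := step L)) step_sum0 oppr0.
Qed.

Lemma xpos_shift a r u : xpos (shift a L) r u = xpos L (r - xpos L 0 a) (u + a).
Proof.
apply: (xpos_char (F := fun u => xpos L (r - xpos L 0 a) (u + a))) => [|w].
  by rewrite add0r xpos_translate subrK.
by rewrite addrAC xposS // /step /rowb /colb !ffunE addrAC.
Qed.

Lemma xpos_rev r u : xpos (rev L) r u = xpos L r (- u).
Proof.
apply: (xpos_char (F := fun u => xpos L r (- u))) => [|w]; first by rewrite oppr0.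
by rewrite -[- w](subrK 1) xposS // step_rev addrK opprD.
Qed.

Lemma cycle_edges_shift a r : cycle_edges (shift a L) r = cycle_edges L (r - xpos L 0 a).
Proof.
set r' := r - xpos L 0 a.
have check_shift u : check_at (shift a L) r u = check_at L r' (u + a).
  by rewrite /check_at xpos_shift /rowb ffunE.
have var_shift u : var_at (shift a L) r u = var_at L r' (u + a).
  by rewrite /var_at xpos_shift /rowb /colb !ffunE.
have bij_shift : bijective (fun u : pos => u + a).
  by exists (fun u => u - a) => u; rewrite ?addrK ?subrK.
congr (_ :|: _).
  rewrite -(imset_bij (fun u => (check_at L r' u, var_at L r' u)) bij_shift).
  by apply: eq_imset => u; rewrite check_shift var_shift.
rewrite -(imset_bij (fun u => (check_at L r' (u + 1), var_at L r' u)) bij_shift).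
by apply: eq_imset => u; rewrite check_shift var_shift addrAC.
Qed.

Lemma cycle_edges_rev r : cycle_edges (rev L) r = cycle_edges L r.
Proof.
pose refl (u : pos) := - u - 1.
have check_rev u : check_at (rev L) r u = check_at L r (refl u + 1).
  by rewrite /check_at xpos_rev /rowb ffunE /refl subrK.
have var_rev u : var_at (rev L) r u = var_at L r (refl u).
  rewrite /var_at xpos_rev /rowb /colb !ffunE /= -[X in xpos L r X](subrK 1) xposS //.
  by rewrite /step /refl /rowb /colb subrK addrA addrAC addrK.
have bij_refl : bijective refl.
  by exists refl => u; rewrite /refl opprD !opprK addrK.
rewrite [LHS]setUC; congr (_ :|: _).
  rewrite -(imset_bij (fun u => (check_at L r u, var_at L r u)) bij_refl).
  by apply: eq_imset => u; rewrite check_rev var_rev /refl subrK opprD.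
rewrite -(imset_bij (fun u => (check_at L r (u + 1), var_at L r u)) bij_refl).
by apply: eq_imset => u; rewrite check_rev var_rev.
Qed.

End ClosedWalkSymmetries.

Lemma cycle_edges_eq_chain L L' r r' : allowable s hl L -> allowable s hl L' ->
  cycle_edges L r = cycle_edges L' r' ->
  exists t, (L' = shift t L /\ r' = xpos L r t) \/ L' = shift t (rev L).
Proof.
move=> HA HA' /(cycle_edges_rigid HA HA') [t [walk_shift | walk_refl]].
  exists t; left; split; last first.
    by have [/(congr1 snd) /= E _] := walk_shift 0; rewrite -[r']/(xpos L' r' 0) E addr0.
  apply/ffunP => u; rewrite ffunE addrC.
  by have [/(congr1 fst) E1 /(congr1 fst) E2] := walk_shift u; apply: injective_projections.
exists (- (t + 1)); right; apply/ffunP => u; rewrite !ffunE /= opprB addrAC addrK.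
by have [/(congr1 fst) E1 /(congr1 fst) E2] := walk_refl u; apply: injective_projections.
Qed.

Lemma chain_iso_cycle_edges L1 L2 r : is_chain B s hl L1 -> chain_iso hl L1 L2 ->
  exists r', cycle_edges L2 r = cycle_edges L1 r'.
Proof.
move=> /chain_step_sum sum0 /chain_isoP [a [] ->].
  by eexists; rewrite cycle_edges_shift.
by eexists; rewrite cycle_edges_shift ?cycle_edges_rev ?step_sum0_rev.
Qed.

Lemma cycle_edges_chain_iso L1 L2 r1 r2 : allowable s hl L1 -> allowable s hl L2 ->
  cycle_edges L1 r1 = cycle_edges L2 r2 -> chain_iso hl L1 L2.
Proof.
move=> HA1 HA2 /(cycle_edges_eq_chain HA1 HA2) [t E]; apply/chain_isoP.
by exists t; case: E => [[-> _]|->]; [left | right].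
Qed.

Lemma shift_period L e j : shift e L = L -> shift (e *+ j) L = L.
Proof.
move=> per; elim: j => [|j IH]; first by rewrite mulr0n shift0.
by rewrite mulrSr -shiftD per IH.
Qed.

Lemma xpos_period L e j : \sum_(u : pos) step L u = 0 -> shift e L = L ->
  xpos L 0 (e *+ j) = xpos L 0 e *+ j.
Proof.
move=> sum0 per; elim: j => [|j IH]; first by rewrite !mulr0n.
have := xpos_shift sum0 e (xpos L 0 e) (e *+ j); rewrite per subrr => E.
by rewrite !mulrSr -E xpos_translate IH addrC.
Qed.

Lemma allowable_aperiodic L e : prime m -> (n.+2 <= m)%N ->
  allowable_chain B s hl L -> shift e L = L -> e = 0.
Proof.
move=> m_pr le_l_m /andP [HL HA] per; have sum0 := chain_step_sum HL.
apply/eqP; apply: contraT => e_neq0; have [lt_l_m | le_m_l] := ltnP n.+2 m.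
  have drift0 : xpos L 0 e = 0.
    have l_unit : (n.+2%:R : 'Z_m) \is a GRing.unit by rewrite Zp_unit_nat ?lt_l_m.
    apply: (mulIr l_unit); rewrite mul0r mulr_natr -xpos_period //.
    by rewrite -mulr_natr pos_natr_period mulr0.
  have [inj_c _] := allowableP L 0 HA.
  have /inj_c /eqP : check_at L 0 e = check_at L 0 0.
    by rewrite /check_at drift0 -{2}per /rowb ffunE add0r.
  by rewrite (negbTE e_neq0).
have m_l : m = n.+2 by apply/eqP; rewrite eqn_leq le_l_m le_m_l.
have e_unit : e \is a GRing.unit.
  have := @Zp_unit_nat n.+2 e; rewrite natr_Zp; apply; first by rewrite -m_l.
  by rewrite ltn_ord andbT lt0n; apply: contraNneq e_neq0 => e0; apply/eqP/val_inj.
have := shift_period (nat_of_ord e^-1) per.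
rewrite -mulr_natr natr_Zp mulrV // => per1.
have [_ _ /eqP neq01 _] := chainP HL 0.
by exfalso; apply: neq01; rewrite -{1}per1 /rowb ffunE add0r.
Qed.

Lemma periodicbE L e : periodicb hl L e = (shift (inZp e) L == L).
Proof.
apply/forallP/eqP => [per | per u].
  apply/ffunP => u; have /eqP := per u.
  by rewrite !cidxE ffunE valZpK -!Zp_nat natrD natr_Zp.
by rewrite !cidxE -{2}per ffunE valZpK -!Zp_nat natrD natr_Zp.
Qed.

Lemma chain_n_allowable L : prime m -> (n.+2 <= m)%N ->
  allowable_chain B s hl L -> chain_n hl L = 1%N.
Proof.
move=> m_pr le_l_m HL; rewrite /chain_n /chain_e.
rewrite (_ : iota 0 n.+2 = iota 0 n.+1 ++ [:: n.+1]) ?find_cat ?size_iota; last first.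
  by rewrite -addn1 iotaD.
have -> : has (fun e => periodicb hl L e.+1) (iota 0 n.+1) = false.
  apply/hasPn => j; rewrite mem_iota add0n /= periodicbE => lt_j_l.
  apply: contraTN isT => /eqP /(allowable_aperiodic m_pr le_l_m HL) /(congr1 val) /=.
  by rewrite modn_small.
by rewrite /= periodicbE -Zp_nat pos_natr_period shift0 eqxx addn0 divnn.
Qed.

Lemma shift_rev_neq L t : is_chain B s hl L -> shift t (rev L) != L.
Proof.
move=> HL; apply/eqP => /ffunP refl.
pose w : pos := inZp (val (- t))./2.
have Et : - t = (odd (- t))%:R + (w + w).
  by rewrite /w -!Zp_nat -!natrD addnn odd_double_half natr_Zp.
have Erow : rowb L (- t - w) = rowb L w by rewrite /rowb -(refl w) !ffunE opprD addrC.
have Ecol : colb L (- t - w - 1) = colb L w.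
  by rewrite /colb -(refl w) !ffunE opprD (addrC (- w)).
have [_ _ neq_row _] := chainP HL w; have [_ _ _ neq_col] := chainP HL (w - 1).
case: (odd _) Et => /= Et.
  by move: Erow neq_row; rewrite Et mulr1n addrA addrK addrC => ->; rewrite eqxx.
by move: Ecol neq_col; rewrite Et mulr0n add0r addrK subrK => ->; rewrite eqxx.
Qed.

Lemma cycle_edges_inj L : prime m -> (n.+2 <= m)%N ->
  allowable_chain B s hl L -> injective (cycle_edges L).
Proof.
move=> m_pr le_l_m HAC r r' E; have /andP [HL HA] := HAC.
have [t [[per ->]|refl]] := cycle_edges_eq_chain HA HA E.
  by rewrite (allowable_aperiodic m_pr le_l_m HAC (esym per)).
by have /eqP := shift_rev_neq t HL; rewrite -refl.
Qed.

Lemma chain_iso_equivalence : equivalence_rel (chain_iso hl (I := I) (k := k)).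
Proof.
move=> L1 L2 L3; split; first exact: chain_iso_refl.
move=> iso12; apply/idP/idP; last exact: chain_iso_trans.
exact/chain_iso_trans/chain_iso_sym.
Qed.

Definition cycle_class (L : chain) := [set cycle_edges L r | r : 'Z_m].

Lemma cycle_class_eq L1 L2 : allowable_chain B s hl L1 -> allowable_chain B s hl L2 ->
  cycle_class L1 = cycle_class L2 <-> chain_iso hl L1 L2.
Proof.
move=> /andP [HL1 HA1] /andP [HL2 HA2]; split=> [E | iso12].
  have : cycle_edges L1 0 \in cycle_class L2 by rewrite -E imset_f.
  by case/imsetP => r _ /(cycle_edges_chain_iso HA1 HA2).
have sub L L' : is_chain B s hl L -> chain_iso hl L L' -> cycle_class L' \subset cycle_class L.
  move=> HL isoLL'; apply/subsetP => _ /imsetP [r _ ->].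
  by have [r' ->] := chain_iso_cycle_edges r HL isoLL'; apply: imset_f.
by apply/eqP; rewrite eqEsubset !sub // chain_iso_sym.
Qed.

Lemma tanner_cycles_partition :
  partition [set cycle_class L | L in allowable_chains B s hl] [set E | tanner_cycle B s n.+2 E].
Proof.
apply/and3P; split.
- apply/eqP/setP => E; rewrite inE; apply/bigcupP/tanner_cycleP.
    by case=> _ /imsetP [L HL ->] /imsetP [r _ ->]; exists L; rewrite inE in HL; last exists r.
  by case=> L HL [r ->]; exists (cycle_class L); rewrite ?imset_f ?inE.
- apply/trivIsetP => _ _ /imsetP [L1 H1 ->] /imsetP [L2 H2 ->].
  move: H1 H2; rewrite !inE => H1 H2; apply: contraNT => /pred0Pn [E /andP [/imsetP [r1 _ ->]]].
  case/imsetP=> r2 _ /(cycle_edges_chain_iso (proj2 (andP H1)) (proj2 (andP H2))).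
  by move/(cycle_class_eq H1 H2) ->.
- apply/imsetP => -[L _ /esym /setP /(_ (cycle_edges L 0))].
  by rewrite inE imset_f.
Qed.

Lemma card_cycle_class L : prime m -> (n.+2 <= m)%N ->
  allowable_chain B s hl L -> #|cycle_class L| = m.
Proof.
move=> m_pr le_l_m HAC; rewrite card_imset; last exact: cycle_edges_inj.
by rewrite card_ord Zp_cast ?prime_gt1.
Qed.

Lemma card_iso_classes :
  #|iso_classes B s hl| = #|[set cycle_class L | L in allowable_chains B s hl]|.
Proof.
apply: card_imset_ker => L1 L2 H1 H2.
have [HAC1 HAC2] : allowable_chain B s hl L1 /\ allowable_chain B s hl L2.
  by rewrite !inE in H1 H2.
apply: iff_trans (iff_sym (cycle_class_eq HAC1 HAC2)).
exact: class_eq chain_iso_equivalence H2.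
Qed.

End TannerCycles.

Theorem mainTheorem9 (I : finType) (k m l : nat) (B : 'I_k -> {set I})
    (s : I -> 'I_k -> 'Z_m) (hl : (0 < l)%N) :
  prime m -> (2 <= l)%N -> (l <= m)%N ->
  (forall L : chain_t I k l, allowable_chain B s hl L ->
     chain_n hl L = 1%N /\ #|[set walk_edges s hl L r | r : 'Z_m]| = m)
  /\ #|[set E | tanner_cycle B s l E]| = (m * #|iso_classes B s hl|)%N.
Proof.
move=> m_pr; case: l hl => [|[|n]] hl //= _ le_l_m.
have card_class L (HAC : allowable_chain B s hl L) := card_cycle_class m_pr le_l_m HAC.
split=> [L HAC | ].
  split; first exact: (chain_n_allowable m_pr le_l_m HAC).
  have /andP [HL _] := HAC.
  by rewrite (eq_imset _ (fun r => walk_edgesE r HL)); apply: card_class.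
rewrite (card_uniform_partition (n := m) _ (tanner_cycles_partition B s hl)); last first.
  by move=> _ /imsetP [L HL ->]; apply: card_class; rewrite inE in HL.
by rewrite card_iso_classes mulnC.
Qed.
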